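(* Let $\mathrm{M}$ be a 2-space group of type $\ast2222$ (IT number 6, $pmm$) such that the flat orbifold $E^2/\mathrm{M}$ (a rectangle) is a square. Let m-ref. be the reflection of the square in a line joining midpoints of opposite sides and d-ref. the reflection in a diagonal. Then $\mathrm{Sym}(\mathrm{M})$ is the dihedral group $\langle \text{m-ref.}, \text{d-ref.}\rangle$ of order 8, $\mathrm{Sym}(\mathrm{M})=\mathrm{Aff}(\mathrm{M})$, and $\Omega:\mathrm{Aff}(\mathrm{M})\to\mathrm{Out}(\mathrm{M})$ is an isomorphism.
   Context: A 2-space group is a discrete group of isometries of $E^2$ with compact quotient. Affine maps of $E^2$ are written $a+A$ ($x\mapsto a+Ax$). For a 2-space group $\mathrm{M}$, let $N_A(\mathrm{M})$ be its normalizer in the affine group of $E^2$; each $a+A\in N_A(\mathrm{M})$ induces an affinity $(a+A)_\star:\mathrm{M}x\mapsto\mathrm{M}(a+Ax)$ of the flat orbifold $E^2/\mathrm{M}$. $\mathrm{Aff}(\mathrm{M})$ is the group of all such affinities and $\mathrm{Sym}(\mathrm{M})=\mathrm{Isom}(E^2/\mathrm{M})$ its subgroup of isometries. $\Omega:\mathrm{Aff}(\mathrm{M})\to\mathrm{Out}(\mathrm{M})$ sends $(a+A)_\star$ to the outer automorphism class of $g\mapsto(a+A)g(a+A)^{-1}$ on $\mathrm{M}$. *)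

From Stdlib Require Import Reals ZArith.
Open Scope R_scope.

Definition R2 : Type := (R * R)%type.
Definition map2 : Type := R2 -> R2.

Definition dist2 (p q : R2) : R :=
  sqrt ((fst p - fst q) ^ 2 + (snd p - snd q) ^ 2).

Definition is_isometry (f : map2) : Prop :=
  (forall p q, dist2 (f p) (f q) = dist2 p q) /\ (forall y, exists x, f x = y).

Definition is_affine (f : map2) : Prop :=
  exists a1 a2 m11 m12 m21 m22 : R,
    m11 * m22 - m12 * m21 <> 0 /\
    forall x, f x = (a1 + m11 * fst x + m12 * snd x,
                     a2 + m21 * fst x + m22 * snd x).

Definition group2 : Type := map2 -> Prop.

(* The standard 2-space group of type *2222 (pmm) whose orbifold is the
   square [0,s]^2: generated by the reflections in the lines x1=0, x1=s,
   x2=0, x2=s; its elements are x |-> (e1 x1 + 2 s k1, e2 x2 + 2 s k2). *)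
Definition pmm_square (s : R) : group2 := fun g =>
  exists (e1 e2 : R) (k1 k2 : Z),
    (e1 = 1 \/ e1 = -1) /\ (e2 = 1 \/ e2 = -1) /\
    forall x, g x = (e1 * fst x + 2 * s * IZR k1, e2 * snd x + 2 * s * IZR k2).

Definition conj_group (iota : map2) (M0 M : group2) : Prop :=
  forall g, M g <-> exists h, M0 h /\ forall x, g (iota x) = iota (h x).

Definition orbit (M : group2) (x : R2) : R2 -> Prop :=
  fun y => exists g, M g /\ y = g x.

Definition Orb (M : group2) : Type :=
  { O : R2 -> Prop | exists x, O = orbit M x }.

Definition orb (M : group2) (x : R2) : Orb M :=
  exist _ (orbit M x) (ex_intro _ x eq_refl).

Definition odist (M : group2) (O1 O2 : Orb M) (r : R) : Prop :=
  (forall p q, proj1_sig O1 p -> proj1_sig O2 q -> r <= dist2 p q) /\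
  (forall e, 0 < e -> exists p q, proj1_sig O1 p /\ proj1_sig O2 q /\
                                  dist2 p q < r + e).

Definition normalizes (M : group2) (phi : map2) : Prop :=
  (forall g, M g -> exists h, M h /\ forall x, phi (g x) = h (phi x)) /\
  (forall h, M h -> exists g, M g /\ forall x, phi (g x) = h (phi x)).

Definition in_NA (M : group2) (phi : map2) : Prop :=
  is_affine phi /\ normalizes M phi.

Definition induces (M : group2) (phi : map2) (F : Orb M -> Orb M) : Prop :=
  forall x, F (orb M x) = orb M (phi x).

Definition Aff (M : group2) (F : Orb M -> Orb M) : Prop :=
  exists phi, in_NA M phi /\ induces M phi F.

Definition Sym (M : group2) (F : Orb M -> Orb M) : Prop :=
  Aff M F /\ forall O1 O2 r, odist M O1 O2 r <-> odist M (F O1) (F O2) r.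

Definition compm (f g : map2) : map2 := fun x => f (g x).

Definition is_aut (M : group2) (alpha : map2 -> map2) : Prop :=
  (forall g, M g -> M (alpha g)) /\
  (forall g h, M g -> M h -> alpha g = alpha h -> g = h) /\
  (forall h, M h -> exists g, M g /\ alpha g = h) /\
  (forall g h, M g -> M h -> alpha (compm g h) = compm (alpha g) (alpha h)).

(* equality in Out(M) = Aut(M)/Inn(M): alpha = c_k o beta on M, k in M,
   where c_k(g) = k g k^{-1} *)
Definition out_eq (M : group2) (alpha beta : map2 -> map2) : Prop :=
  exists k, M k /\ forall g, M g -> compm (alpha g) k = compm k (beta g).

(* Omega(F) is the class of alpha: alpha(g) = phi g phi^{-1} for some phi in
   N_A(M) inducing F *)
Definition Omega_rel (M : group2) (F : Orb M -> Orb M) (alpha : map2 -> map2)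
  : Prop :=
  exists phi, in_NA M phi /\ induces M phi F /\
    forall g, M g -> compm (alpha g) phi = compm phi g.

Definition compO {M : group2} (F G : Orb M -> Orb M) : Orb M -> Orb M :=
  fun O => F (G O).

From Stdlib Require Import Reals ZArith List Lra Lia Psatz.
From Stdlib Require Import FunctionalExtensionality PropExtensionality ProofIrrelevance.
From Stdlib Require Import ClassicalEpsilon.
Open Scope R_scope.

(* Conjugating by [iota] reduces everything to the standard group [P] of the
   maps x |-> (+-x1 + 2 s k1, +-x2 + 2 s k2).  An affine map normalizing [P]
   conjugates translations to translations, so its linear part is an integral
   matrix with integral inverse, and conjugates the reflections in the axes to
   reflections, so that matrix is a signed permutation matrix; its translation
   part then lies in s Z^2.  Modulo [P] such a map is one of the 8 symmetries of
   the square [0,s]^2, all isometries, which act differently on the orbit of an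
   interior point: Aff(M) = Sym(M) is dihedral of order 8.  Omega is injective
   because the only affine map commuting with all of [P] is the identity, and
   surjective because an automorphism of [P] preserves reflections, hence maps
   each of the two families of parallel reflections onto one family by an
   affine bijection of their indices in Z, and is therefore conjugation by one
   of the normalizing maps. *)

Definition idm : map2 := fun x => x.

Lemma map2_eq_pointwise (f g : map2) : f = g -> forall x, f x = g x.
Proof. intros ->; reflexivity. Qed.

Definition affine_map (a1 a2 m11 m12 m21 m22 : R) : map2 :=
  fun x => (a1 + m11 * fst x + m12 * snd x, a2 + m21 * fst x + m22 * snd x).

Lemma is_affine_affine_map (f : map2) : is_affine f ->
  exists a1 a2 m11 m12 m21 m22, m11 * m22 - m12 * m21 <> 0 /\
    f = affine_map a1 a2 m11 m12 m21 m22.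
Proof.
  intros (a1 & a2 & m11 & m12 & m21 & m22 & Hdet & Hf).
  exists a1, a2, m11, m12, m21, m22. split; [exact Hdet|].
  apply functional_extensionality. exact Hf.
Qed.

Lemma affine_comp (f g : map2) : is_affine f -> is_affine g -> is_affine (compm f g).
Proof.
  intros (a1 & a2 & m11 & m12 & m21 & m22 & Hd & Hf)
         (b1 & b2 & n11 & n12 & n21 & n22 & Hd' & Hg).
  exists (a1 + m11 * b1 + m12 * b2), (a2 + m21 * b1 + m22 * b2),
    (m11 * n11 + m12 * n21), (m11 * n12 + m12 * n22),
    (m21 * n11 + m22 * n21), (m21 * n12 + m22 * n22).
  split.
  - intro H. apply (Rmult_integral_contrapositive_currified _ _ Hd Hd').
    rewrite <- H. ring.
  - intro x. unfold compm. rewrite Hf, Hg. simpl. f_equal; ring.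
Qed.

Lemma affine_inv (f : map2) : is_affine f -> exists g, is_affine g /\
  (forall x, g (f x) = x) /\ (forall y, f (g y) = y).
Proof.
  intros (a1 & a2 & m11 & m12 & m21 & m22 & Hd & Hf).
  set (d := m11 * m22 - m12 * m21) in *.
  exists (fun y => ((m22 * (fst y - a1) - m12 * (snd y - a2)) / d,
                    (- m21 * (fst y - a1) + m11 * (snd y - a2)) / d)).
  split; [|split].
  - exists ((- m22 * a1 + m12 * a2) / d), ((m21 * a1 - m11 * a2) / d),
      (m22 / d), (- m12 / d), (- m21 / d), (m11 / d).
    split.
    + replace (m22 / d * (m11 / d) - - m12 / d * (- m21 / d)) with (/ d)
        by (unfold d in *; field; exact Hd).
      apply Rinv_neq_0_compat, Hd.
    + intros [y1 y2]; simpl. f_equal; unfold d in *; field; exact Hd.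
  - intros [x1 x2]. rewrite Hf. simpl. f_equal; unfold d in *; field; exact Hd.
  - intros [y1 y2]. rewrite Hf. simpl. f_equal; unfold d in *; field; exact Hd.
Qed.

Definition sqdist2 (p q : R2) : R := (fst p - fst q) ^ 2 + (snd p - snd q) ^ 2.

Lemma dist2_eq_sqdist2 (a b c d : R2) : dist2 a b = dist2 c d -> sqdist2 a b = sqdist2 c d.
Proof.
  unfold dist2, sqdist2. intro H.
  apply sqrt_inj; [| | exact H];
    apply Rplus_le_le_0_compat; apply pow2_ge_0.
Qed.

Lemma orthonormal_frame_coords p q r t x1 x2 y1 y2 :
  p * p + r * r = 1 -> q * q + t * t = 1 -> p * q + r * t = 0 ->
  y1 * p + y2 * r = x1 -> y1 * q + y2 * t = x2 ->
  y1 * y1 + y2 * y2 = x1 * x1 + x2 * x2 ->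
  y1 = x1 * p + x2 * q /\ y2 = x1 * r + x2 * t.
Proof.
  intros Ep Eq Epq Dx1 Dx2 Ny.
  assert (Z : Rsqr (y1 - x1 * p - x2 * q) + Rsqr (y2 - x1 * r - x2 * t) = 0).
  { unfold Rsqr.
    replace ((y1 - x1 * p - x2 * q) * (y1 - x1 * p - x2 * q)
             + (y2 - x1 * r - x2 * t) * (y2 - x1 * r - x2 * t)) with
      ((y1 * y1 + y2 * y2) - 2 * x1 * (y1 * p + y2 * r) - 2 * x2 * (y1 * q + y2 * t)
       + x1 * x1 * (p * p + r * r) + 2 * x1 * x2 * (p * q + r * t)
       + x2 * x2 * (q * q + t * t)) by ring.
    rewrite Ny, Dx1, Dx2, Ep, Eq, Epq. ring. }
  apply Rplus_sqr_eq_0 in Z. split; lra.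
Qed.

Lemma isometry_affine_orthogonal (f : map2) :
  (forall p q, dist2 (f p) (f q) = dist2 p q) ->
  exists a1 a2 p q r t, p * p + r * r = 1 /\ q * q + t * t = 1 /\ p * q + r * t = 0 /\
    f = affine_map a1 a2 p q r t.
Proof.
  intro Hf.
  assert (Hsq : forall x y, sqdist2 (f x) (f y) = sqdist2 x y)
    by (intros; apply dist2_eq_sqdist2, Hf).
  destruct (f (0, 0)) as [o1 o2] eqn:EO.
  destruct (f (1, 0)) as [u1 u2] eqn:EU.
  destruct (f (0, 1)) as [v1 v2] eqn:EV.
  exists o1, o2, (u1 - o1), (v1 - o1), (u2 - o2), (v2 - o2).
  pose proof (Hsq (1, 0) (0, 0)) as HU. pose proof (Hsq (0, 1) (0, 0)) as HV.
  pose proof (Hsq (1, 0) (0, 1)) as HUV.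
  rewrite EO, EU, EV in *. unfold sqdist2 in HU, HV, HUV; simpl in HU, HV, HUV.
  assert (Eu : (u1 - o1) * (u1 - o1) + (u2 - o2) * (u2 - o2) = 1) by nra.
  assert (Ev : (v1 - o1) * (v1 - o1) + (v2 - o2) * (v2 - o2) = 1) by nra.
  assert (Euv : (u1 - o1) * (v1 - o1) + (u2 - o2) * (v2 - o2) = 0) by nra.
  split; [exact Eu | split; [exact Ev | split; [exact Euv |]]].
  apply functional_extensionality. intros [x1 x2]. unfold affine_map; simpl.
  destruct (f (x1, x2)) as [w1 w2] eqn:EW.
  pose proof (Hsq (x1, x2) (0, 0)) as HO. pose proof (Hsq (x1, x2) (1, 0)) as HU'.
  pose proof (Hsq (x1, x2) (0, 1)) as HV'.
  rewrite EO, EU, EV, EW in *.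
  unfold sqdist2 in HO, HU', HV'; simpl in HO, HU', HV'.
  destruct (orthonormal_frame_coords (u1 - o1) (v1 - o1) (u2 - o2) (v2 - o2) x1 x2
              (w1 - o1) (w2 - o2) Eu Ev Euv) as [Y1 Y2]; try nra.
  f_equal; lra.
Qed.

Lemma isometry_affine (f : map2) : is_isometry f -> is_affine f.
Proof.
  intros [Hd _].
  destruct (isometry_affine_orthogonal f Hd) as (a1 & a2 & p & q & r & t & Ep & Eq & Epq & ->).
  exists a1, a2, p, q, r, t. split; [|reflexivity].
  intro H. assert (L : (p * t - q * r) ^ 2 = 1).
  { replace ((p * t - q * r) ^ 2) with ((p * p + r * r) * (q * q + t * t) - (p * q + r * t) ^ 2)
      by ring.
    rewrite Ep, Eq, Epq. ring. }
  rewrite H in L. lra.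
Qed.

Section GroupOrbifold.
Variable M : group2.
Hypothesis M_idm : M idm.
Hypothesis M_compm : forall g h, M g -> M h -> M (compm g h).
Hypothesis M_inv : forall g, M g ->
  exists h, M h /\ (forall x, h (g x) = x) /\ (forall x, g (h x) = x).
Hypothesis M_affine : forall g, M g -> is_affine g.

Lemma Orb_eq (O1 O2 : Orb M) : proj1_sig O1 = proj1_sig O2 -> O1 = O2.
Proof.
  destruct O1 as [S1 H1], O2 as [S2 H2]. simpl. intros ->.
  f_equal. apply proof_irrelevance.
Qed.

Lemma orbit_refl x : orbit M x x.
Proof. exists idm. split; [exact M_idm | reflexivity]. Qed.

Lemma orb_eq_orbit x y : orb M x = orb M y -> exists g, M g /\ x = g y.
Proof.
  intro E. apply (f_equal (@proj1_sig _ _)) in E. simpl in E.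
  change (orbit M y x). rewrite <- E. apply orbit_refl.
Qed.

Lemma orb_mem g y : M g -> orb M (g y) = orb M y.
Proof.
  intro Hg. apply Orb_eq. simpl. destruct (M_inv g Hg) as (gi & Hgi & Eg & _).
  apply functional_extensionality. intro z. apply propositional_extensionality.
  split.
  - intros (h & Hh & ->). exists (compm h g). split; [apply M_compm; auto | reflexivity].
  - intros (h & Hh & ->). exists (compm h gi). split; [apply M_compm; auto |].
    unfold compm. rewrite Eg. reflexivity.
Qed.

Lemma Orb_orb (O : Orb M) : exists x, O = orb M x.
Proof. destruct O as [S [x Hx]]. exists x. apply Orb_eq. exact Hx. Qed.

Lemma Orb_funext (F G : Orb M -> Orb M) :
  (forall x, F (orb M x) = G (orb M x)) -> F = G.
Proof.
  intro H. apply functional_extensionality. intro O.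
  destruct (Orb_orb O) as [x ->]. apply H.
Qed.

Definition orb_rep (O : Orb M) : R2 :=
  proj1_sig (constructive_indefinite_description _ (proj2_sig O)).

Lemma orb_rep_spec O : O = orb M (orb_rep O).
Proof.
  apply Orb_eq. unfold orb_rep.
  destruct (constructive_indefinite_description _ (proj2_sig O)). exact e.
Qed.

Definition induced (phi : map2) (O : Orb M) : Orb M := orb M (phi (orb_rep O)).

Lemma induces_induced phi : normalizes M phi -> induces M phi (induced phi).
Proof.
  intros [Nf _] x. unfold induced.
  destruct (orb_eq_orbit _ _ (eq_sym (orb_rep_spec (orb M x)))) as (g & Hg & ->).
  destruct (Nf g Hg) as (h & Hh & ->). apply orb_mem, Hh.
Qed.

Lemma induces_mem phi F O y : normalizes M phi -> induces M phi F ->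
  proj1_sig (F O) y <-> exists x, proj1_sig O x /\ y = phi x.
Proof.
  intros [Nf Nr] HF. destruct (Orb_orb O) as [x0 ->]. rewrite HF. simpl. split.
  - intros (h & Hh & ->). destruct (Nr h Hh) as (g & Hg & Eg).
    exists (g x0). split; [exists g; auto | symmetry; apply Eg].
  - intros (x & (g & Hg & ->) & ->). destruct (Nf g Hg) as (h & Hh & Eh).
    exists h. split; auto.
Qed.

Lemma Sym_of_isometry phi F : in_NA M phi -> induces M phi F ->
  (forall p q, dist2 (phi p) (phi q) = dist2 p q) -> Sym M F.
Proof.
  intros HA HF Hd. split; [exists phi; auto |].
  destruct HA as [_ HN].
  assert (Hmem : forall O y, proj1_sig (F O) y <-> exists x, proj1_sig O x /\ y = phi x)
    by (intros; apply induces_mem; auto).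
  intros O1 O2 r. unfold odist. split.
  - intros [Lb Ap]. split.
    + intros p q Hp Hq. apply Hmem in Hp, Hq.
      destruct Hp as (x & Hx & ->), Hq as (y & Hy & ->). rewrite Hd. auto.
    + intros e He. destruct (Ap e He) as (p & q & Hp & Hq & Hpq).
      exists (phi p), (phi q). rewrite Hd.
      split; [|split]; auto; apply Hmem; eauto.
  - intros [Lb Ap]. split.
    + intros p q Hp Hq. rewrite <- Hd. apply Lb; apply Hmem; eauto.
    + intros e He. destruct (Ap e He) as (p & q & Hp & Hq & Hpq).
      apply Hmem in Hp, Hq. destruct Hp as (x & Hx & ->), Hq as (y & Hy & ->).
      rewrite Hd in Hpq. exists x, y. auto.
Qed.

Lemma conj_mem alpha phi g : in_NA M phi ->
  (forall g, M g -> compm (alpha g) phi = compm phi g) -> M g -> M (alpha g).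
Proof.
  intros [HA [Nf _]] Halpha Hg. destruct (Nf g Hg) as (h & Hh & E).
  destruct (affine_inv phi HA) as (phinv & _ & _ & Rp).
  replace (alpha g) with h; [exact Hh |].
  apply functional_extensionality. intro y. rewrite <- (Rp y), <- E.
  symmetry. exact (map2_eq_pointwise _ _ (Halpha g Hg) (phinv y)).
Qed.

Lemma Omega_rel_exists F : Aff M F -> exists alpha, is_aut M alpha /\ Omega_rel M F alpha.
Proof.
  intros (phi & [HA [Nf Nr]] & HF).
  destruct (affine_inv phi HA) as (phinv & _ & Linv & Rinv).
  set (alpha := fun g y => phi (g (phinv y))).
  assert (Halpha : forall g h, (forall x, phi (g x) = h (phi x)) -> alpha g = h).
  { intros g h E. apply functional_extensionality. intro y. unfold alpha.
    rewrite E, Rinv. reflexivity. }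
  exists alpha. split; [split; [|split; [|split]] |].
  - intros g Hg. destruct (Nf g Hg) as (h & Hh & E). rewrite (Halpha g h E). exact Hh.
  - intros g h _ _ E. apply functional_extensionality. intro x.
    pose proof (map2_eq_pointwise _ _ E (phi x)) as E'. unfold alpha in E'.
    rewrite !Linv in E'. rewrite <- (Linv (g x)), E', Linv. reflexivity.
  - intros h Hh. destruct (Nr h Hh) as (g & Hg & E). exists g. split; auto.
  - intros g h _ _. apply functional_extensionality. intro y.
    unfold alpha, compm. rewrite Linv. reflexivity.
  - exists phi. split; [split; [|split]; auto | split; auto].
    intros g _. apply functional_extensionality. intro x. unfold alpha, compm.
    rewrite Linv. reflexivity.
Qed.

Lemma Omega_rel_comp F1 F2 alpha1 alpha2 :
  Omega_rel M F1 alpha1 -> Omega_rel M F2 alpha2 ->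
  Omega_rel M (compO F1 F2) (fun g => alpha1 (alpha2 g)).
Proof.
  intros (phi1 & H1 & I1 & Rel1) (phi2 & H2 & I2 & Rel2).
  exists (compm phi1 phi2). split; [|split].
  - destruct H1 as [A1 [Nf1 Nr1]], H2 as [A2 [Nf2 Nr2]].
    split; [apply affine_comp; auto | split].
    + intros g Hg. destruct (Nf2 g Hg) as (h & Hh & E). destruct (Nf1 h Hh) as (h' & Hh' & E').
      exists h'. split; auto. intro x. unfold compm. rewrite E, E'. reflexivity.
    + intros h Hh. destruct (Nr1 h Hh) as (g & Hg & E). destruct (Nr2 g Hg) as (g' & Hg' & E').
      exists g'. split; auto. intro x. unfold compm. rewrite E', E. reflexivity.
  - intro x. unfold compO, compm. rewrite I2, I1. reflexivity.
  - intros g Hg. apply functional_extensionality. intro x.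
    assert (M2 : M (alpha2 g)) by (apply (conj_mem alpha2 phi2); auto).
    pose proof (map2_eq_pointwise _ _ (Rel1 _ M2) (phi2 x)) as A.
    pose proof (map2_eq_pointwise _ _ (Rel2 _ Hg) x) as B.
    unfold compm in *. rewrite A, B. reflexivity.
Qed.

Lemma out_eq_of_factor phi psi k alpha beta : is_affine psi -> M k ->
  (forall y, phi y = k (psi y)) ->
  (forall g, M g -> compm (alpha g) phi = compm phi g) ->
  (forall g, M g -> compm (beta g) psi = compm psi g) ->
  out_eq M alpha beta.
Proof.
  intros Hpsi Hk Ek Ralpha Rbeta.
  destruct (affine_inv psi Hpsi) as (psinv & _ & _ & Rp).
  exists k. split; [exact Hk |]. intros g Hg. apply functional_extensionality. intro z.
  rewrite <- (Rp z). unfold compm. rewrite <- Ek.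
  pose proof (map2_eq_pointwise _ _ (Ralpha g Hg) (psinv z)) as A. unfold compm in A.
  pose proof (map2_eq_pointwise _ _ (Rbeta g Hg) (psinv z)) as B. unfold compm in B.
  rewrite A, B. apply Ek.
Qed.

(* If [alpha1 = c_k o alpha2], then [phi1^-1 o k o phi2] is an affine map
   commuting with every element of [M]. *)
Lemma Omega_rel_inj F1 F2 alpha1 alpha2 :
  (forall c, is_affine c -> (forall g, M g -> forall x, c (g x) = g (c x)) ->
     forall x, c x = x) ->
  Omega_rel M F1 alpha1 -> Omega_rel M F2 alpha2 -> out_eq M alpha1 alpha2 -> F1 = F2.
Proof.
  intros Hcentral (phi1 & H1 & I1 & Rel1) (phi2 & H2 & I2 & Rel2) (k & Mk & Ek).
  destruct (affine_inv phi1 (proj1 H1)) as (phi1inv & A1inv & L1 & Rp1).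
  set (c := fun x => phi1inv (k (phi2 x))).
  assert (Cc : forall g, M g -> forall y, c (g y) = g (c y)).
  { intros g Hg y. unfold c.
    pose proof (map2_eq_pointwise _ _ (Rel2 g Hg) y) as A. unfold compm in A. rewrite <- A.
    pose proof (map2_eq_pointwise _ _ (Ek g Hg) (phi2 y)) as B. unfold compm in B.
    rewrite <- B, <- (Rp1 (k (phi2 y))) at 1.
    pose proof (map2_eq_pointwise _ _ (Rel1 g Hg) (phi1inv (k (phi2 y)))) as C.
    unfold compm in C. rewrite C, L1. reflexivity. }
  assert (Ac : is_affine c).
  { apply affine_comp; [exact A1inv |].
    apply affine_comp; [apply M_affine, Mk | apply H2]. }
  assert (C : forall y, k (phi2 y) = phi1 y).
  { intro y. rewrite <- (Rp1 (k (phi2 y))). f_equal. exact (Hcentral c Ac Cc y). }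
  apply Orb_funext. intro x. rewrite I1, I2, <- C. apply orb_mem, Mk.
Qed.

Lemma aut_idm beta : is_aut M beta -> beta idm = idm.
Proof.
  intros (Bin & _ & _ & Bhom).
  pose proof (Bhom idm idm M_idm M_idm) as E. change (compm idm idm) with idm in E.
  destruct (M_inv _ (Bin _ M_idm)) as (b' & _ & Hb' & _).
  apply functional_extensionality. intro x.
  pose proof (map2_eq_pointwise _ _ E x) as Ex. unfold compm in Ex.
  rewrite <- (Hb' (beta idm x)), <- Ex, Hb'. reflexivity.
Qed.

(* In [pmm_square s] the reflections are the involutions commuting with an
   element of order greater than 2 (half-turns do not); this characterisation
   is invariant under automorphisms. *)
Definition reflection_like (h : map2) : Prop :=
  compm h h = idm /\ h <> idm /\
  exists g, M g /\ compm g h = compm h g /\ compm g g <> idm.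

Lemma aut_reflection_like beta h : is_aut M beta -> M h ->
  reflection_like (beta h) <-> reflection_like h.
Proof.
  intros Haut Hh. pose proof (aut_idm beta Haut) as Bid.
  destruct Haut as (Bin & Binj & Bsur & Bhom).
  assert (Bid_iff : forall g, M g -> beta g = idm <-> g = idm).
  { intros g Hg. split; [|intros ->; exact Bid].
    intro E. apply Binj; auto. rewrite E, Bid. reflexivity. }
  split.
  - intros (HH & Hn & g' & Hg' & Hc & Hgg). destruct (Bsur g' Hg') as (g & Hg & <-).
    split; [|split].
    + apply Bid_iff; auto. rewrite Bhom; auto.
    + intro E. apply Hn, Bid_iff; auto.
    + exists g. split; auto. split.
      * apply Binj; auto. rewrite !Bhom; auto.
      * intro E. apply Hgg. rewrite <- Bhom; auto. apply Bid_iff; auto.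
  - intros (HH & Hn & g & Hg & Hc & Hgg). split; [|split].
    + rewrite <- Bhom, HH; auto.
    + intro E. apply Hn, Bid_iff; auto.
    + exists (beta g). split; auto. split.
      * rewrite <- !Bhom, Hc; auto.
      * rewrite <- Bhom; auto. intro E. apply Hgg, Bid_iff; auto.
Qed.

End GroupOrbifold.

Definition is_sign (e : R) : Prop := e = 1 \/ e = -1.

Lemma is_sign_int (m : R) (z l : Z) : m = IZR z -> m * IZR l = 1 -> is_sign m.
Proof.
  intros -> H. rewrite <- mult_IZR in H. apply eq_IZR in H.
  destruct (Z.eq_mul_1 _ _ H) as [-> | ->]; [left | right]; reflexivity.
Qed.

Ltac sign := first [left; reflexivity | right; reflexivity].

Section Pmm.
Variable s : R.
Hypothesis s_pos : 0 < s.
Local Notation P := (pmm_square s).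

Definition pmm_map (e1 e2 : R) (k1 k2 : Z) : map2 :=
  fun x => (e1 * fst x + 2 * s * IZR k1, e2 * snd x + 2 * s * IZR k2).

Lemma pmm_square_iff g :
  P g <-> exists e1 e2 k1 k2, is_sign e1 /\ is_sign e2 /\ g = pmm_map e1 e2 k1 k2.
Proof.
  split.
  - intros (e1 & e2 & k1 & k2 & H1 & H2 & H). exists e1, e2, k1, k2.
    repeat split; auto. apply functional_extensionality, H.
  - intros (e1 & e2 & k1 & k2 & H1 & H2 & ->). exists e1, e2, k1, k2.
    repeat split; auto.
Qed.

Lemma pmm_map_mem e1 e2 k1 k2 : is_sign e1 -> is_sign e2 -> P (pmm_map e1 e2 k1 k2).
Proof. intros. apply pmm_square_iff. exists e1, e2, k1, k2. auto. Qed.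

Lemma lattice_comp e f k l : is_sign e -> is_sign f -> exists g m, is_sign g /\
  forall t, e * (f * t + 2 * s * IZR l) + 2 * s * IZR k = g * t + 2 * s * IZR m.
Proof.
  intros [-> | ->] [-> | ->].
  - exists 1, (k + l)%Z. split; [sign |]. intro; rewrite plus_IZR; ring.
  - exists (-1), (k + l)%Z. split; [sign |]. intro; rewrite plus_IZR; ring.
  - exists (-1), (k - l)%Z. split; [sign |]. intro; rewrite minus_IZR; ring.
  - exists 1, (k - l)%Z. split; [sign |]. intro; rewrite minus_IZR; ring.
Qed.

Lemma lattice_inv e k : is_sign e -> exists f l, is_sign f /\
  (forall t, f * (e * t + 2 * s * IZR k) + 2 * s * IZR l = t) /\
  (forall t, e * (f * t + 2 * s * IZR l) + 2 * s * IZR k = t).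
Proof.
  intros [-> | ->].
  - exists 1, (- k)%Z. split; [sign |]. split; intro; rewrite opp_IZR; ring.
  - exists (-1), k. split; [sign |]. split; intro; ring.
Qed.

Lemma pmm_idm : P idm.
Proof.
  exists 1, 1, 0%Z, 0%Z. repeat split; try sign.
  intros [x1 x2]. unfold idm; simpl. f_equal; ring.
Qed.

Lemma pmm_comp g h : P g -> P h -> P (compm g h).
Proof.
  intros (e1 & e2 & k1 & k2 & H1 & H2 & Hg) (f1 & f2 & l1 & l2 & G1 & G2 & Hh).
  destruct (lattice_comp e1 f1 k1 l1 H1 G1) as (g1 & m1 & S1 & E1).
  destruct (lattice_comp e2 f2 k2 l2 H2 G2) as (g2 & m2 & S2 & E2).
  exists g1, g2, m1, m2. repeat split; auto.
  intro x. unfold compm. rewrite Hg, Hh. simpl. rewrite E1, E2. reflexivity.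
Qed.

Lemma pmm_inv g : P g ->
  exists h, P h /\ (forall x, h (g x) = x) /\ (forall x, g (h x) = x).
Proof.
  intros (e1 & e2 & k1 & k2 & H1 & H2 & Hg).
  destruct (lattice_inv e1 k1 H1) as (f1 & l1 & S1 & L1 & R1).
  destruct (lattice_inv e2 k2 H2) as (f2 & l2 & S2 & L2 & R2).
  exists (pmm_map f1 f2 l1 l2). split; [apply pmm_map_mem; auto | split];
    intros [x1 x2]; rewrite Hg; unfold pmm_map; simpl.
  - rewrite L1, L2. reflexivity.
  - rewrite R1, R2. reflexivity.
Qed.

Lemma pmm_affine g : P g -> is_affine g.
Proof.
  intros (e1 & e2 & k1 & k2 & H1 & H2 & Hg).
  exists (2 * s * IZR k1), (2 * s * IZR k2), e1, 0, 0, e2. split.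
  - destruct H1 as [-> | ->], H2 as [-> | ->]; lra.
  - intro x. rewrite Hg. simpl. f_equal; ring.
Qed.

Definition swap (sw : bool) (x : R2) : R2 := if sw then (snd x, fst x) else x.

Definition norm_map (sw : bool) (e1 e2 : R) (j1 j2 : Z) : map2 :=
  fun x => (e1 * fst (swap sw x) + s * IZR j1, e2 * snd (swap sw x) + s * IZR j2).

Definition flip (b : bool) (t : R) : R := if b then s - t else t.

Definition square_sym (sw b1 b2 : bool) : map2 :=
  fun x => (flip b1 (fst (swap sw x)), flip b2 (snd (swap sw x))).

Lemma half_lattice_flip e j : is_sign e -> exists f k, is_sign f /\
  forall t, e * t + s * IZR j = f * flip (Z.odd j) t + 2 * s * IZR k.
Proof.
  intro He. pose proof (Z.div2_odd j) as Ej. set (m := Z.div2 j) in *.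
  destruct (Z.odd j); cbn [Z.b2z] in Ej; unfold flip.
  - destruct He as [-> | ->].
    + exists (-1), (m + 1)%Z. split; [sign |]. intro t.
      rewrite Ej, !plus_IZR, !mult_IZR. simpl. ring.
    + exists 1, m. split; [sign |]. intro t.
      rewrite Ej, !plus_IZR, !mult_IZR. simpl. ring.
  - exists e, m. split; auto. intro t. rewrite Ej, Z.add_0_r, mult_IZR. simpl. ring.
Qed.

Lemma norm_map_square_sym sw e1 e2 j1 j2 : is_sign e1 -> is_sign e2 -> exists h, P h /\
  forall x, norm_map sw e1 e2 j1 j2 x = h (square_sym sw (Z.odd j1) (Z.odd j2) x).
Proof.
  intros H1 H2.
  destruct (half_lattice_flip e1 j1 H1) as (f1 & k1 & S1 & E1).
  destruct (half_lattice_flip e2 j2 H2) as (f2 & k2 & S2 & E2).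
  exists (pmm_map f1 f2 k1 k2). split; [apply pmm_map_mem; auto |].
  intro x. unfold norm_map, square_sym, pmm_map. simpl. rewrite E1, E2. reflexivity.
Qed.

Lemma square_sym_norm_map sw b1 b2 : exists e1 e2 j1 j2, is_sign e1 /\ is_sign e2 /\
  square_sym sw b1 b2 = norm_map sw e1 e2 j1 j2.
Proof.
  exists (if b1 then -1 else 1), (if b2 then -1 else 1),
    (if b1 then 1 else 0)%Z, (if b2 then 1 else 0)%Z.
  split; [destruct b1; sign | split; [destruct b2; sign |]].
  apply functional_extensionality. intro x.
  unfold square_sym, norm_map, flip. destruct b1, b2; simpl; f_equal; ring.
Qed.

Lemma half_lattice_conj e j f : is_sign e -> is_sign f ->
  (forall l, exists k, forall t,
     e * (f * t + 2 * s * IZR l) + s * IZR j = f * (e * t + s * IZR j) + 2 * s * IZR k) /\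
  (forall k, exists l, forall t,
     e * (f * t + 2 * s * IZR l) + s * IZR j = f * (e * t + s * IZR j) + 2 * s * IZR k).
Proof.
  intros He Hf. split.
  - intro l. destruct He as [-> | ->], Hf as [-> | ->].
    + exists l. intro; ring.
    + exists (l + j)%Z. intro; rewrite plus_IZR; ring.
    + exists (- l)%Z. intro; rewrite opp_IZR; ring.
    + exists (j - l)%Z. intro; rewrite minus_IZR; ring.
  - intro k. destruct He as [-> | ->], Hf as [-> | ->].
    + exists k. intro; ring.
    + exists (k - j)%Z. intro; rewrite minus_IZR; ring.
    + exists (- k)%Z. intro; rewrite opp_IZR; ring.
    + exists (j - k)%Z. intro; rewrite minus_IZR; ring.
Qed.

Lemma norm_map_normalizes sw e1 e2 j1 j2 : is_sign e1 -> is_sign e2 ->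
  normalizes P (norm_map sw e1 e2 j1 j2).
Proof.
  intros H1 H2. split.
  - intros g Hg. apply pmm_square_iff in Hg.
    destruct Hg as (f1 & f2 & l1 & l2 & G1 & G2 & ->).
    destruct sw.
    + destruct (proj1 (half_lattice_conj e1 j1 f2 H1 G2) l2) as [k1 E1].
      destruct (proj1 (half_lattice_conj e2 j2 f1 H2 G1) l1) as [k2 E2].
      exists (pmm_map f2 f1 k1 k2). split; [apply pmm_map_mem; auto |].
      intro x. unfold norm_map, pmm_map; simpl. rewrite E1, E2. reflexivity.
    + destruct (proj1 (half_lattice_conj e1 j1 f1 H1 G1) l1) as [k1 E1].
      destruct (proj1 (half_lattice_conj e2 j2 f2 H2 G2) l2) as [k2 E2].
      exists (pmm_map f1 f2 k1 k2). split; [apply pmm_map_mem; auto |].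
      intro x. unfold norm_map, pmm_map; simpl. rewrite E1, E2. reflexivity.
  - intros h Hh. apply pmm_square_iff in Hh.
    destruct Hh as (f1 & f2 & k1 & k2 & G1 & G2 & ->).
    destruct sw.
    + destruct (proj2 (half_lattice_conj e1 j1 f1 H1 G1) k1) as [l1 E1].
      destruct (proj2 (half_lattice_conj e2 j2 f2 H2 G2) k2) as [l2 E2].
      exists (pmm_map f2 f1 l2 l1). split; [apply pmm_map_mem; auto |].
      intro x. unfold norm_map, pmm_map; simpl. rewrite E1, E2. reflexivity.
    + destruct (proj2 (half_lattice_conj e1 j1 f1 H1 G1) k1) as [l1 E1].
      destruct (proj2 (half_lattice_conj e2 j2 f2 H2 G2) k2) as [l2 E2].
      exists (pmm_map f1 f2 l1 l2). split; [apply pmm_map_mem; auto |].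
      intro x. unfold norm_map, pmm_map; simpl. rewrite E1, E2. reflexivity.
Qed.

Lemma norm_map_affine sw e1 e2 j1 j2 : is_sign e1 -> is_sign e2 ->
  is_affine (norm_map sw e1 e2 j1 j2).
Proof.
  intros H1 H2. destruct sw.
  - exists (s * IZR j1), (s * IZR j2), 0, e1, e2, 0. split.
    + destruct H1 as [-> | ->], H2 as [-> | ->]; lra.
    + intros [x1 x2]. unfold norm_map; simpl. f_equal; ring.
  - exists (s * IZR j1), (s * IZR j2), e1, 0, 0, e2. split.
    + destruct H1 as [-> | ->], H2 as [-> | ->]; lra.
    + intros [x1 x2]. unfold norm_map; simpl. f_equal; ring.
Qed.

Lemma norm_map_isometry sw e1 e2 j1 j2 : is_sign e1 -> is_sign e2 ->
  forall x y, dist2 (norm_map sw e1 e2 j1 j2 x) (norm_map sw e1 e2 j1 j2 y) = dist2 x y.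
Proof.
  intros H1 H2 [x1 x2] [y1 y2]. unfold dist2, norm_map.
  destruct sw; simpl; f_equal; destruct H1 as [-> | ->], H2 as [-> | ->]; ring.
Qed.

Lemma normalizes_pmm_map phi e1 e2 k1 k2 : normalizes P phi -> is_sign e1 -> is_sign e2 ->
  (exists f1 f2 l1 l2, is_sign f1 /\ is_sign f2 /\
     forall x, phi (pmm_map e1 e2 k1 k2 x) = pmm_map f1 f2 l1 l2 (phi x)) /\
  (exists f1 f2 l1 l2, is_sign f1 /\ is_sign f2 /\
     forall x, phi (pmm_map f1 f2 l1 l2 x) = pmm_map e1 e2 k1 k2 (phi x)).
Proof.
  intros [Nf Nr] H1 H2. split.
  - destruct (Nf _ (pmm_map_mem e1 e2 k1 k2 H1 H2)) as (h & Hh & E).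
    apply pmm_square_iff in Hh. destruct Hh as (f1 & f2 & l1 & l2 & S1 & S2 & ->).
    exists f1, f2, l1, l2. auto.
  - destruct (Nr _ (pmm_map_mem e1 e2 k1 k2 H1 H2)) as (g & Hg & E).
    apply pmm_square_iff in Hg. destruct Hg as (f1 & f2 & l1 & l2 & S1 & S2 & ->).
    exists f1, f2, l1, l2. auto.
Qed.

Section AffineConjugation.
Variables a1 a2 m11 m12 m21 m22 : R.
Hypothesis det_nz : m11 * m22 - m12 * m21 <> 0.
Local Notation A := (affine_map a1 a2 m11 m12 m21 m22).

Lemma affine_conj_pmm_map e1 e2 f1 f2 k1 k2 l1 l2 :
  (forall x, A (pmm_map e1 e2 k1 k2 x) = pmm_map f1 f2 l1 l2 (A x)) ->
  m11 * e1 = f1 * m11 /\ m12 * e2 = f1 * m12 /\ m21 * e1 = f2 * m21 /\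
  m22 * e2 = f2 * m22 /\
  a1 + 2 * s * (m11 * IZR k1 + m12 * IZR k2) = f1 * a1 + 2 * s * IZR l1 /\
  a2 + 2 * s * (m21 * IZR k1 + m22 * IZR k2) = f2 * a2 + 2 * s * IZR l2.
Proof.
  intro H. pose proof (H (0, 0)) as H0. pose proof (H (1, 0)) as Hx. pose proof (H (0, 1)) as Hy.
  unfold affine_map, pmm_map in H0, Hx, Hy; simpl in H0, Hx, Hy.
  injection H0 as A1 A2. injection Hx as B1 B2. injection Hy as C1 C2.
  repeat split; lra.
Qed.

Lemma affine_conj_translation_fwd k1 k2 f1 f2 l1 l2 : is_sign f1 -> is_sign f2 ->
  (forall x, A (pmm_map 1 1 k1 k2 x) = pmm_map f1 f2 l1 l2 (A x)) ->
  m11 * IZR k1 + m12 * IZR k2 = IZR l1 /\ m21 * IZR k1 + m22 * IZR k2 = IZR l2.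
Proof.
  intros S1 S2 H. apply affine_conj_pmm_map in H. destruct H as (E1 & E2 & E3 & E4 & E5 & E6).
  assert (F1 : f1 = 1).
  { destruct S1 as [-> | ->]; [reflexivity |]. exfalso. apply det_nz.
    replace m11 with 0 by lra. replace m12 with 0 by lra. ring. }
  assert (F2 : f2 = 1).
  { destruct S2 as [-> | ->]; [reflexivity |]. exfalso. apply det_nz.
    replace m21 with 0 by lra. replace m22 with 0 by lra. ring. }
  subst f1 f2. split; apply Rmult_eq_reg_l with (2 * s); lra.
Qed.

Lemma affine_conj_translation_bwd k1 k2 f1 f2 n1 n2 : is_sign f1 -> is_sign f2 ->
  (forall x, A (pmm_map f1 f2 n1 n2 x) = pmm_map 1 1 k1 k2 (A x)) ->
  m11 * IZR n1 + m12 * IZR n2 = IZR k1 /\ m21 * IZR n1 + m22 * IZR n2 = IZR k2.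
Proof.
  intros S1 S2 H. apply affine_conj_pmm_map in H. destruct H as (E1 & E2 & E3 & E4 & E5 & E6).
  assert (F1 : f1 = 1).
  { destruct S1 as [-> | ->]; [reflexivity |]. exfalso. apply det_nz.
    replace m11 with 0 by lra. replace m21 with 0 by lra. ring. }
  assert (F2 : f2 = 1).
  { destruct S2 as [-> | ->]; [reflexivity |]. exfalso. apply det_nz.
    replace m12 with 0 by lra. replace m22 with 0 by lra. ring. }
  subst f1 f2. split; apply Rmult_eq_reg_l with (2 * s); lra.
Qed.

Lemma normalizer_entries_sign : normalizes P A ->
  (m12 = 0 -> m21 = 0 -> is_sign m11 /\ is_sign m22) /\
  (m11 = 0 -> m22 = 0 -> is_sign m12 /\ is_sign m21).
Proof.
  intro HN.
  destruct (normalizes_pmm_map _ 1 1 1 0 HN ltac:(sign) ltac:(sign))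
    as [(f1 & f2 & l1 & l2 & S1 & S2 & Fx) (g1 & g2 & n1 & n2 & T1 & T2 & Bx)].
  destruct (normalizes_pmm_map _ 1 1 0 1 HN ltac:(sign) ltac:(sign))
    as [(f3 & f4 & l3 & l4 & S3 & S4 & Fy) (g3 & g4 & n3 & n4 & T3 & T4 & By)].
  apply affine_conj_translation_fwd in Fx, Fy; auto.
  apply affine_conj_translation_bwd in Bx, By; auto.
  simpl in Fx, Fy, Bx, By.
  destruct Fx as [Fx1 Fx2], Fy as [Fy1 Fy2], Bx as [Bx1 Bx2], By as [By1 By2].
  split; intros Z1 Z2; rewrite Z1, Z2 in *; split.
  - apply (is_sign_int m11 l1 n1); lra.
  - apply (is_sign_int m22 l4 n4); lra.
  - apply (is_sign_int m12 l3 n2); lra.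
  - apply (is_sign_int m21 l2 n3); lra.
Qed.

(* Conjugates of the reflections in the two axes are reflections again,
   which forces the linear part to be diagonal or antidiagonal. *)
Lemma normalizer_signed_perm : normalizes P A ->
  ((m12 = 0 /\ m21 = 0) \/ (m11 = 0 /\ m22 = 0)) /\
  (exists j1, a1 = s * IZR j1) /\ (exists j2, a2 = s * IZR j2).
Proof.
  intro HN.
  destruct (proj1 (normalizes_pmm_map _ (-1) 1 0 0 HN ltac:(sign) ltac:(sign)))
    as (f1 & f2 & l1 & l2 & S1 & S2 & H).
  destruct (proj1 (normalizes_pmm_map _ 1 (-1) 0 0 HN ltac:(sign) ltac:(sign)))
    as (g1 & g2 & l3 & l4 & T1 & T2 & G).
  apply affine_conj_pmm_map in H, G. simpl in H, G.
  destruct H as (A1 & A2 & A3 & A4 & A5 & A6), G as (B1 & B2 & B3 & B4 & B5 & B6).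
  destruct S1 as [-> | ->], S2 as [-> | ->].
  - exfalso. apply det_nz. replace m11 with 0 by lra. replace m21 with 0 by lra. ring.
  - assert (g1 = -1).
    { destruct T1 as [-> | ->]; [exfalso | reflexivity]. apply det_nz.
      replace m11 with 0 by lra. replace m12 with 0 by lra. ring. }
    subst g1. split; [right; split; lra |].
    split; [exists l3 | exists l2]; lra.
  - assert (g2 = -1).
    { destruct T2 as [-> | ->]; [exfalso | reflexivity]. apply det_nz.
      replace m21 with 0 by lra. replace m22 with 0 by lra. ring. }
    subst g2. split; [left; split; lra |].
    split; [exists l1 | exists l4]; lra.
  - exfalso. apply det_nz. replace m12 with 0 by lra. replace m22 with 0 by lra. ring.
Qed.

End AffineConjugation.

Lemma normalizer_norm_map phi : is_affine phi -> normalizes P phi ->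
  exists sw e1 e2 j1 j2, is_sign e1 /\ is_sign e2 /\ phi = norm_map sw e1 e2 j1 j2.
Proof.
  intros HA HN. apply is_affine_affine_map in HA.
  destruct HA as (a1 & a2 & m11 & m12 & m21 & m22 & Hdet & ->).
  destruct (normalizer_entries_sign _ _ _ _ _ _ Hdet HN) as [Hdiag Hanti].
  destruct (normalizer_signed_perm _ _ _ _ _ _ Hdet HN)
    as [[[Z12 Z21] | [Z11 Z22]] [[j1 E1] [j2 E2]]].
  - destruct (Hdiag Z12 Z21) as [S1 S2].
    exists false, m11, m22, j1, j2. split; [exact S1 | split; [exact S2 |]].
    apply functional_extensionality. intros [x1 x2].
    unfold affine_map, norm_map; simpl. subst. f_equal; ring.
  - destruct (Hanti Z11 Z22) as [S1 S2].
    exists true, m12, m21, j1, j2. split; [exact S1 | split; [exact S2 |]].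
    apply functional_extensionality. intros [x1 x2].
    unfold affine_map, norm_map; simpl. subst. f_equal; ring.
Qed.

Lemma lattice_open_interval u v e k : 0 < u < s -> 0 < v < s -> is_sign e ->
  u = e * v + 2 * s * IZR k -> u = v.
Proof.
  intros Hu Hv [-> | ->] E.
  - assert (Hk1 : IZR k < 1) by nra. assert (Hk0 : -1 < IZR k) by nra.
    apply lt_IZR in Hk1. apply lt_IZR in Hk0.
    replace k with 0%Z in E by lia. simpl in E. lra.
  - assert (Hk1 : IZR k < 1) by nra. assert (Hk0 : 0 < IZR k) by nra.
    apply lt_IZR in Hk1. apply lt_IZR in Hk0. lia.
Qed.

Definition in_open_square (x : R2) : Prop := 0 < fst x < s /\ 0 < snd x < s.

Lemma pmm_open_square h u v : P h -> in_open_square u -> in_open_square v ->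
  u = h v -> u = v.
Proof.
  intros Hh [U1 U2] [V1 V2] E. apply pmm_square_iff in Hh.
  destruct Hh as (e1 & e2 & k1 & k2 & S1 & S2 & ->).
  destruct u as [u1 u2], v as [v1 v2]. unfold pmm_map in E; simpl in *.
  injection E as E1 E2. f_equal.
  - apply (lattice_open_interval u1 v1 e1 k1); auto.
  - apply (lattice_open_interval u2 v2 e2 k2); auto.
Qed.

Lemma pmm_affine_centralizer c : is_affine c ->
  (forall h, P h -> forall x, c (h x) = h (c x)) -> forall x, c x = x.
Proof.
  intros HA H. apply is_affine_affine_map in HA.
  destruct HA as (a1 & a2 & m11 & m12 & m21 & m22 & Hdet & ->).
  assert (Hc : forall e1 e2 k1 k2, is_sign e1 -> is_sign e2 ->
    a1 + 2 * s * (m11 * IZR k1 + m12 * IZR k2) = e1 * a1 + 2 * s * IZR k1 /\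
    a2 + 2 * s * (m21 * IZR k1 + m22 * IZR k2) = e2 * a2 + 2 * s * IZR k2).
  { intros e1 e2 k1 k2 S1 S2.
    destruct (affine_conj_pmm_map a1 a2 m11 m12 m21 m22 e1 e2 e1 e2 k1 k2 k1 k2
                (fun x => H _ (pmm_map_mem e1 e2 k1 k2 S1 S2) x)) as (_ & _ & _ & _ & E).
    exact E. }
  destruct (Hc 1 1 1%Z 0%Z ltac:(sign) ltac:(sign)) as [Ex1 Ex2].
  destruct (Hc 1 1 0%Z 1%Z ltac:(sign) ltac:(sign)) as [Ey1 Ey2].
  destruct (Hc (-1) 1 0%Z 0%Z ltac:(sign) ltac:(sign)) as [Ea1 _].
  destruct (Hc 1 (-1) 0%Z 0%Z ltac:(sign) ltac:(sign)) as [_ Ea2].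
  simpl in Ex1, Ex2, Ey1, Ey2, Ea1, Ea2.
  assert (m11 = 1) by (apply Rmult_eq_reg_l with (2 * s); lra).
  assert (m21 = 0) by (apply Rmult_eq_reg_l with (2 * s); lra).
  assert (m12 = 0) by (apply Rmult_eq_reg_l with (2 * s); lra).
  assert (m22 = 1) by (apply Rmult_eq_reg_l with (2 * s); lra).
  assert (a1 = 0) by lra. assert (a2 = 0) by lra.
  subst. intros [x1 x2]. unfold affine_map; simpl. f_equal; ring.
Qed.

(* [refl_map false y] is the reflection in the line [x1 = s y],
   [refl_map true y] the reflection in the line [x2 = s y]. *)
Definition refl_map (tau : bool) (y : Z) : map2 :=
  if tau then pmm_map 1 (-1) 0 y else pmm_map (-1) 1 y 0.

Lemma refl_map_mem tau y : P (refl_map tau y).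
Proof. destruct tau; apply pmm_map_mem; sign. Qed.

Lemma refl_map_reflection_like tau y : reflection_like P (refl_map tau y).
Proof.
  split; [|split].
  - apply functional_extensionality. intros [x1 x2].
    destruct tau; unfold compm, refl_map, pmm_map, idm; simpl; f_equal; ring.
  - intro H. pose proof (map2_eq_pointwise _ _ H (1, 1)) as E.
    pose proof (map2_eq_pointwise _ _ H (0, 0)) as F.
    destruct tau; unfold refl_map, pmm_map, idm in E, F; simpl in E, F;
      injection E as E1 E2; injection F as F1 F2; lra.
  - exists (if tau then pmm_map 1 1 1 0 else pmm_map 1 1 0 1).
    split; [destruct tau; apply pmm_map_mem; sign | split].
    + apply functional_extensionality. intros [x1 x2].
      destruct tau; unfold compm, refl_map, pmm_map; simpl; f_equal; ring.
    + intro H. pose proof (map2_eq_pointwise _ _ H (0, 0)) as E.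
      destruct tau; unfold compm, pmm_map, idm in E; simpl in E; injection E as E1 E2; lra.
Qed.

Lemma IZR_half_lattice_0 k : s * IZR k = 0 -> k = 0%Z.
Proof. intro H. apply eq_IZR. apply Rmult_eq_reg_l with s; lra. Qed.

Lemma reflection_like_refl_map h : P h -> reflection_like P h ->
  exists tau y, h = refl_map tau y.
Proof.
  intros Hh (HH & Hn & g & Hg & Hc & Hgg). apply pmm_square_iff in Hh.
  destruct Hh as (e1 & e2 & k1 & k2 & S1 & S2 & ->).
  pose proof (map2_eq_pointwise _ _ HH (0, 0)) as E. unfold compm, pmm_map, idm in E; simpl in E.
  injection E as E1 E2.
  destruct S1 as [-> | ->], S2 as [-> | ->].
  - exfalso. apply Hn.
    replace k1 with 0%Z by (symmetry; apply IZR_half_lattice_0; lra).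
    replace k2 with 0%Z by (symmetry; apply IZR_half_lattice_0; lra).
    apply functional_extensionality. intros [x1 x2]. unfold pmm_map, idm; simpl. f_equal; ring.
  - replace k1 with 0%Z by (symmetry; apply IZR_half_lattice_0; lra).
    exists true, k2. reflexivity.
  - replace k2 with 0%Z by (symmetry; apply IZR_half_lattice_0; lra).
    exists false, k1. reflexivity.
  - exfalso. apply Hgg. apply pmm_square_iff in Hg.
    destruct Hg as (f1 & f2 & l1 & l2 & T1 & T2 & ->).
    pose proof (map2_eq_pointwise _ _ Hc (0, 0)) as C. unfold compm, pmm_map in C; simpl in C.
    injection C as C1 C2.
    apply functional_extensionality. intros [x1 x2]. unfold compm, pmm_map, idm; simpl.
    f_equal; [destruct T1 as [-> | ->] | destruct T2 as [-> | ->]]; lra.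
Qed.

Lemma refl_map_comm_diff tau y y' :
  compm (refl_map tau y) (refl_map (negb tau) y') =
  compm (refl_map (negb tau) y') (refl_map tau y).
Proof.
  apply functional_extensionality. intros [x1 x2].
  destruct tau; unfold compm, refl_map, pmm_map; simpl; f_equal; ring.
Qed.

Lemma refl_map_comm_same tau y y' :
  compm (refl_map tau y) (refl_map tau y') = compm (refl_map tau y') (refl_map tau y) ->
  y = y'.
Proof.
  intro H. pose proof (map2_eq_pointwise _ _ H (0, 0)) as E.
  destruct tau; unfold compm, refl_map, pmm_map in E; simpl in E; injection E; intros;
    apply eq_IZR; apply Rmult_eq_reg_l with (4 * s); lra.
Qed.

Lemma refl_map_neq tau y y' : refl_map tau y <> refl_map (negb tau) y'.
Proof.
  intro H. pose proof (map2_eq_pointwise _ _ H (0, 0)) as E.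
  pose proof (map2_eq_pointwise _ _ H (1, 1)) as F.
  destruct tau; unfold refl_map, pmm_map in E, F; simpl in E, F;
    injection E as E1 E2; injection F as F1 F2; lra.
Qed.

Lemma refl_map_inj tau y y' : refl_map tau y = refl_map tau y' -> y = y'.
Proof.
  intro H. pose proof (map2_eq_pointwise _ _ H (0, 0)) as E.
  destruct tau; unfold refl_map, pmm_map in E; simpl in E; injection E; intros;
    apply eq_IZR; apply Rmult_eq_reg_l with (2 * s); lra.
Qed.

Lemma refl_map_triple tau a b c :
  compm (refl_map tau a) (compm (refl_map tau b) (refl_map tau c)) =
  refl_map tau (a - b + c)%Z.
Proof.
  apply functional_extensionality. intros [x1 x2].
  destruct tau; unfold compm, refl_map, pmm_map; simpl;
    rewrite plus_IZR, minus_IZR; f_equal; ring.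
Qed.

Lemma pmm_refl_ind (Q : map2 -> Prop) :
  (forall tau a, Q (refl_map tau a)) ->
  (forall g h, P g -> P h -> Q g -> Q h -> Q (compm g h)) -> forall h, P h -> Q h.
Proof.
  intros Qrefl Qcomp h Hh. apply pmm_square_iff in Hh.
  destruct Hh as (e1 & e2 & k1 & k2 & S1 & S2 & ->).
  assert (Qtr : forall tau y, Q (compm (refl_map tau y) (refl_map tau 0)))
    by (intros; apply Qcomp; auto; apply refl_map_mem).
  replace (pmm_map e1 e2 k1 k2) with (compm (pmm_map e1 1 k1 0) (pmm_map 1 e2 0 k2))
    by (apply functional_extensionality; intros [x1 x2];
        unfold compm, pmm_map; simpl; f_equal; ring).
  apply Qcomp; try (apply pmm_map_mem; auto; sign).
  - destruct S1 as [-> | ->]; [| apply (Qrefl false)].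
    replace (pmm_map 1 1 k1 0) with (compm (refl_map false k1) (refl_map false 0))
      by (apply functional_extensionality; intros [x1 x2];
          unfold compm, refl_map, pmm_map; simpl; f_equal; ring).
    apply Qtr.
  - destruct S2 as [-> | ->]; [| apply (Qrefl true)].
    replace (pmm_map 1 1 0 k2) with (compm (refl_map true k2) (refl_map true 0))
      by (apply functional_extensionality; intros [x1 x2];
          unfold compm, refl_map, pmm_map; simpl; f_equal; ring).
    apply Qtr.
Qed.

Lemma aut_refl_map beta tau a : is_aut P beta ->
  exists sig y, beta (refl_map tau a) = refl_map sig y.
Proof.
  intro Haut. pose proof Haut as (Bin & _).
  apply reflection_like_refl_map; [apply Bin, refl_map_mem |].
  apply (aut_reflection_like P pmm_idm pmm_comp pmm_inv); auto;
    [apply refl_map_mem | apply refl_map_reflection_like].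
Qed.

Lemma aut_refl_map_surj beta sig y : is_aut P beta ->
  exists tau a, beta (refl_map tau a) = refl_map sig y.
Proof.
  intro Haut. pose proof Haut as (_ & _ & Bsur & _).
  destruct (Bsur _ (refl_map_mem sig y)) as (h & Hh & Eh).
  assert (Rh : reflection_like P h).
  { apply (aut_reflection_like P pmm_idm pmm_comp pmm_inv beta h Haut Hh).
    rewrite Eh. apply refl_map_reflection_like. }
  destruct (reflection_like_refl_map h Hh Rh) as (tau & a & ->).
  exists tau, a. exact Eh.
Qed.

(* Two reflections commute iff they are equal or lie in different families,
   and automorphisms preserve commutation. *)
Lemma aut_refl_map_family beta tau tau' a a' sig sig' y y' : is_aut P beta ->
  beta (refl_map tau a) = refl_map sig y -> beta (refl_map tau' a') = refl_map sig' y' ->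
  (tau = tau' <-> sig = sig').
Proof.
  intros (Bin & Binj & _ & Bhom) E E'.
  assert (Comm : compm (refl_map sig y) (refl_map sig' y') =
                 compm (refl_map sig' y') (refl_map sig y) <->
                 compm (refl_map tau a) (refl_map tau' a') =
                 compm (refl_map tau' a') (refl_map tau a)).
  { rewrite <- E, <- E', <- !Bhom by apply refl_map_mem.
    split; [apply Binj; apply pmm_comp; apply refl_map_mem | intros ->; reflexivity]. }
  split; intros <-.
  - destruct (Bool.bool_dec sig sig') as [| Hne]; [assumption | exfalso].
    replace sig' with (negb sig) in * by (destruct sig, sig'; simpl; congruence).
    pose proof (proj1 Comm (refl_map_comm_diff sig y y')) as C.
    apply refl_map_comm_same in C. subst a'.
    apply (refl_map_neq sig y y'). congruence.
  - destruct (Bool.bool_dec tau tau') as [| Hne]; [assumption | exfalso].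
    replace tau' with (negb tau) in * by (destruct tau, tau'; simpl; congruence).
    pose proof (proj2 Comm (refl_map_comm_diff tau a a')) as C.
    apply refl_map_comm_same in C. subst y'.
    apply (refl_map_neq tau a a'). apply Binj; try apply refl_map_mem. congruence.
Qed.

Lemma aut_on_reflections beta : is_aut P beta ->
  exists sig (F G : Z -> Z),
    (forall a, beta (refl_map false a) = refl_map sig (F a)) /\
    (forall a, beta (refl_map true a) = refl_map (negb sig) (G a)).
Proof.
  intro Haut. destruct (aut_refl_map beta false 0 Haut) as (sig & y0 & E0).
  assert (Hfam : forall tau a, exists y,
    beta (refl_map tau a) = refl_map (if tau then negb sig else sig) y).
  { intros tau a. destruct (aut_refl_map beta tau a Haut) as (sig' & y & E).
    exists y. rewrite E. f_equal.
    pose proof (aut_refl_map_family _ _ _ _ _ _ _ _ _ Haut E0 E) as T.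
    destruct tau, sig, sig'; simpl; try reflexivity; exfalso;
      destruct T as [T1 T2]; discriminate (T1 eq_refl) || discriminate (T2 eq_refl). }
  exists sig,
    (fun a => proj1_sig (constructive_indefinite_description _ (Hfam false a))),
    (fun a => proj1_sig (constructive_indefinite_description _ (Hfam true a))).
  split; intro a; [exact (proj2_sig (constructive_indefinite_description _ (Hfam false a)))
                  | exact (proj2_sig (constructive_indefinite_description _ (Hfam true a)))].
Qed.

Lemma aut_refl_index_affine beta tau sig (F : Z -> Z) : is_aut P beta ->
  (forall a, beta (refl_map tau a) = refl_map sig (F a)) ->
  forall a b c, F (a - b + c)%Z = (F a - F b + F c)%Z.
Proof.
  intros (_ & _ & _ & Bhom) HF a b c. apply (refl_map_inj sig).
  rewrite <- refl_map_triple, <- !HF, <- refl_map_triple, !Bhom;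
    auto using refl_map_mem, pmm_comp.
Qed.

Lemma Z_affine_bij (f : Z -> Z) : (forall a b c, f (a - b + c)%Z = (f a - f b + f c)%Z) ->
  (forall y, exists a, f a = y) ->
  exists eps, (eps = 1 \/ eps = -1)%Z /\ forall a, f a = (f 0 + eps * a)%Z.
Proof.
  intros Haff Hsurj.
  assert (L : forall a, f a = (f 0 + (f 1 - f 0) * a)%Z).
  { intro a. induction a using Z.peano_ind.
    - lia.
    - replace (Z.succ a) with (a - 0 + 1)%Z by lia. rewrite Haff. lia.
    - replace (Z.pred a) with (a - 1 + 0)%Z by lia. rewrite Haff. lia. }
  destruct (Hsurj (f 0 + 1)%Z) as [a Ea]. rewrite L in Ea.
  exists (f 1 - f 0)%Z. split; [apply (Z.eq_mul_1 _ (a)); lia | exact L].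
Qed.

Lemma aut_refl_index_linear beta tau sig (F G : Z -> Z) : is_aut P beta ->
  (forall a, beta (refl_map tau a) = refl_map sig (F a)) ->
  (forall a, beta (refl_map (negb tau) a) = refl_map (negb sig) (G a)) ->
  exists eps, is_sign (IZR eps) /\ forall a, F a = (F 0 + eps * a)%Z.
Proof.
  intros Haut HF HG.
  assert (Fsurj : forall y, exists a, F a = y).
  { intro y. destruct (aut_refl_map_surj beta sig y Haut) as (tau' & a & E).
    destruct (Bool.bool_dec tau' tau) as [-> | Hne].
    - exists a. apply (refl_map_inj sig). rewrite <- HF. exact E.
    - exfalso. replace tau' with (negb tau) in E by (destruct tau, tau'; simpl; congruence).
      rewrite HG in E. apply (refl_map_neq sig y (G a)).
      rewrite <- E. destruct sig; reflexivity. }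
  destruct (Z_affine_bij F (aut_refl_index_affine _ _ _ _ Haut HF) Fsurj)
    as (eps & Seps & L).
  exists eps. split; [destruct Seps as [-> | ->]; sign | exact L].
Qed.

Lemma aut_pmm_inner beta : is_aut P beta ->
  exists sw e1 e2 j1 j2, is_sign e1 /\ is_sign e2 /\
    forall h, P h -> forall x,
      beta h (norm_map sw e1 e2 j1 j2 x) = norm_map sw e1 e2 j1 j2 (h x).
Proof.
  intro Haut. destruct (aut_on_reflections beta Haut) as (sig & F & G & HF & HG).
  destruct (aut_refl_index_linear beta false sig F G Haut HF HG) as (eF & SF & LF).
  assert (HF' : forall a, beta (refl_map (negb true) a) = refl_map (negb (negb sig)) (F a))
    by (intro; rewrite Bool.negb_involutive; apply HF).
  destruct (aut_refl_index_linear beta true (negb sig) G F Haut HG HF') as (eG & SG & LG).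
  exists sig, (IZR (if sig then eG else eF)), (IZR (if sig then eF else eG)),
    (if sig then G 0 else F 0)%Z, (if sig then F 0 else G 0)%Z.
  split; [destruct sig; assumption | split; [destruct sig; assumption |]].
  destruct Haut as (_ & _ & _ & Bhom).
  intros h Hh. pattern h. revert h Hh. apply pmm_refl_ind.
  - intros [|] a x; [rewrite HG, LG | rewrite HF, LF]; destruct x as [x1 x2];
      destruct sig; unfold refl_map, norm_map, pmm_map; simpl;
      rewrite plus_IZR, mult_IZR; f_equal; ring.
  - intros g h Hg Hh Qg Qh x. rewrite Bhom by assumption. unfold compm.
    rewrite Qh, Qg. reflexivity.
Qed.

Lemma square_sym_comp sw b1 b2 sw' b1' b2' x :
  square_sym sw b1 b2 (square_sym sw' b1' b2' x) =
  square_sym (xorb sw sw') (xorb b1 (if sw then b2' else b1'))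
             (xorb b2 (if sw then b1' else b2')) x.
Proof.
  destruct x as [x1 x2]. unfold square_sym, flip, swap.
  destruct sw, sw', b1, b2, b1', b2'; simpl; f_equal; ring.
Qed.

Definition square_point : R2 := (s / 4, s / 8).

Lemma square_sym_point_open sw b1 b2 : in_open_square (square_sym sw b1 b2 square_point).
Proof.
  unfold in_open_square, square_sym, flip, swap, square_point.
  destruct sw, b1, b2; simpl; lra.
Qed.

Lemma square_sym_point_inj sw b1 b2 sw' b1' b2' :
  square_sym sw b1 b2 square_point = square_sym sw' b1' b2' square_point ->
  sw = sw' /\ b1 = b1' /\ b2 = b2'.
Proof.
  unfold square_sym, flip, swap, square_point. intro E.
  destruct sw, b1, b2, sw', b1', b2'; simpl in E; try (injection E; intros; lra); auto.
Qed.

End Pmm.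

Section Conjugate.
Variables (s : R) (iota iotainv : map2) (M : group2).
Hypothesis s_pos : 0 < s.
Hypothesis iota_isometry : is_isometry iota.
Hypothesis iotainv_affine : is_affine iotainv.
Hypothesis iota_left : forall x, iotainv (iota x) = x.
Hypothesis iota_right : forall y, iota (iotainv y) = y.
Hypothesis M_conj : conj_group iota (pmm_square s) M.
Local Notation P := (pmm_square s).

Definition pull (g : map2) : map2 := fun x => iotainv (g (iota x)).
Definition push (h : map2) : map2 := fun y => iota (h (iotainv y)).

Lemma pull_push h : pull (push h) = h.
Proof.
  apply functional_extensionality. intro x. unfold pull, push. rewrite !iota_left. reflexivity.
Qed.

Lemma push_pull g : push (pull g) = g.
Proof.
  apply functional_extensionality. intro x. unfold pull, push. rewrite !iota_right. reflexivity.
Qed.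

Lemma push_comp g h : push (compm g h) = compm (push g) (push h).
Proof.
  apply functional_extensionality. intro x. unfold push, compm. rewrite iota_left. reflexivity.
Qed.

Lemma pull_comp g h : pull (compm g h) = compm (pull g) (pull h).
Proof.
  apply functional_extensionality. intro x. unfold pull, compm. rewrite iota_right. reflexivity.
Qed.

Lemma mem_pull g : M g <-> P (pull g).
Proof.
  rewrite (M_conj g). split.
  - intros (h & Hh & E). replace (pull g) with h; [exact Hh |].
    apply functional_extensionality. intro x. unfold pull. rewrite E, iota_left. reflexivity.
  - intro H. exists (pull g). split; [exact H |].
    intro x. unfold pull. rewrite iota_right. reflexivity.
Qed.

Lemma mem_push h : M (push h) <-> P h.
Proof. rewrite mem_pull, pull_push. reflexivity. Qed.

Lemma iota_affine : is_affine iota.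
Proof. apply isometry_affine, iota_isometry. Qed.

Lemma push_affine h : is_affine h -> is_affine (push h).
Proof.
  intro H. apply (affine_comp iota (compm h iotainv) iota_affine), affine_comp; assumption.
Qed.

Lemma pull_affine g : is_affine g -> is_affine (pull g).
Proof.
  intro H. apply (affine_comp iotainv (compm g iota) iotainv_affine), affine_comp;
    [assumption | exact iota_affine].
Qed.

Lemma push_isometry h : (forall x y, dist2 (h x) (h y) = dist2 x y) ->
  forall x y, dist2 (push h x) (push h y) = dist2 x y.
Proof.
  intros H x y. destruct iota_isometry as [Hd _]. unfold push.
  rewrite Hd, H, <- Hd, !iota_right. reflexivity.
Qed.

Lemma M_idm : M idm.
Proof.
  apply mem_pull. replace (pull idm) with idm; [apply pmm_idm |].
  symmetry. apply functional_extensionality, iota_left.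
Qed.

Lemma M_comp g h : M g -> M h -> M (compm g h).
Proof. rewrite !mem_pull, pull_comp. apply pmm_comp. Qed.

Lemma M_inv g : M g -> exists h, M h /\ (forall x, h (g x) = x) /\ (forall x, g (h x) = x).
Proof.
  rewrite mem_pull. intro Hg. destruct (pmm_inv s (pull g) Hg) as (h & Hh & E1 & E2).
  exists (push h). split; [apply mem_push, Hh | split]; intro x; unfold push.
  - pose proof (E1 (iotainv x)) as E. unfold pull in E. rewrite iota_right in E.
    rewrite E. apply iota_right.
  - pose proof (E2 (iotainv x)) as E. unfold pull in E.
    rewrite <- (iota_right (g _)), E. apply iota_right.
Qed.

Lemma M_affine g : M g -> is_affine g.
Proof.
  rewrite mem_pull. intro H. rewrite <- (push_pull g). apply push_affine, (pmm_affine s), H.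
Qed.

Lemma normalizes_push h : normalizes P h -> normalizes M (push h).
Proof.
  intros [Nf Nr]. split.
  - intros g Hg. apply mem_pull in Hg. destruct (Nf _ Hg) as (k & Hk & E).
    exists (push k). split; [apply mem_push, Hk |]. intro x.
    specialize (E (iotainv x)). unfold pull, push in *. rewrite iota_right in E.
    rewrite iota_left, <- E. reflexivity.
  - intros k Hk. apply mem_pull in Hk. destruct (Nr _ Hk) as (g & Hg & E).
    exists (push g). split; [apply mem_push, Hg |]. intro x.
    unfold pull, push in *. rewrite iota_left, E, iota_right. reflexivity.
Qed.

Lemma normalizes_pull phi : normalizes M phi -> normalizes P (pull phi).
Proof.
  intros [Nf Nr]. split.
  - intros g Hg. apply mem_push in Hg. destruct (Nf _ Hg) as (k & Hk & E).
    exists (pull k). split; [apply mem_pull, Hk |]. intro x.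
    specialize (E (iota x)). unfold pull, push in *. rewrite iota_left in E.
    rewrite E, iota_right. reflexivity.
  - intros k Hk. apply mem_push in Hk. destruct (Nr _ Hk) as (g & Hg & E).
    exists (pull g). split; [apply mem_pull, Hg |]. intro x.
    specialize (E (iota x)). unfold pull, push in *.
    rewrite iota_right, E, iota_left. reflexivity.
Qed.


Lemma push_iota h x : push h (iota x) = iota (h x).
Proof. unfold push. rewrite iota_left. reflexivity. Qed.

Lemma orb_iota_pmm h x : P h -> orb M (iota (h x)) = orb M (iota x).
Proof. intro Hh. rewrite <- push_iota. apply (orb_mem M M_comp M_inv), mem_push, Hh. Qed.

Lemma Orb_funext_iota (F G : Orb M -> Orb M) :
  (forall x, F (orb M (iota x)) = G (orb M (iota x))) -> F = G.
Proof. intro H. apply Orb_funext. intro y. rewrite <- (iota_right y). apply H. Qed.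

Lemma NA_square_sym phi : in_NA M phi -> exists sw b1 b2 h, P h /\
  forall x, phi (iota x) = iota (h (square_sym s sw b1 b2 x)).
Proof.
  intros [HA HN].
  destruct (normalizer_norm_map s s_pos (pull phi) (pull_affine _ HA) (normalizes_pull _ HN))
    as (sw & e1 & e2 & j1 & j2 & S1 & S2 & E).
  destruct (norm_map_square_sym s sw e1 e2 j1 j2 S1 S2) as (h & Hh & Eh).
  exists sw, (Z.odd j1), (Z.odd j2), h. split; [exact Hh |].
  intro x. rewrite <- Eh, <- E. unfold pull. rewrite iota_right. reflexivity.
Qed.

Lemma NA_push_square_sym sw b1 b2 : in_NA M (push (square_sym s sw b1 b2)) /\
  forall x y, dist2 (push (square_sym s sw b1 b2) x) (push (square_sym s sw b1 b2) y) =
              dist2 x y.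
Proof.
  destruct (square_sym_norm_map s sw b1 b2) as (e1 & e2 & j1 & j2 & S1 & S2 & ->).
  split; [split |].
  - apply push_affine, norm_map_affine; assumption.
  - apply normalizes_push, norm_map_normalizes; assumption.
  - apply push_isometry, norm_map_isometry; assumption.
Qed.

Definition sym_map (sw b1 b2 : bool) : Orb M -> Orb M :=
  induced M (push (square_sym s sw b1 b2)).

Lemma sym_map_orb sw b1 b2 x :
  sym_map sw b1 b2 (orb M (iota x)) = orb M (iota (square_sym s sw b1 b2 x)).
Proof.
  unfold sym_map. rewrite (induces_induced M M_idm M_comp M_inv);
    [| apply (NA_push_square_sym sw b1 b2)].
  rewrite push_iota. reflexivity.
Qed.

Lemma Sym_sym_map sw b1 b2 : Sym M (sym_map sw b1 b2).
Proof.
  destruct (NA_push_square_sym sw b1 b2) as [HNA Hd].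
  apply (Sym_of_isometry M _ _ HNA); [| exact Hd].
  apply (induces_induced M M_idm M_comp M_inv), HNA.
Qed.

Lemma sym_map_idm : (fun O : Orb M => O) = sym_map false false false.
Proof.
  apply Orb_funext_iota. intro x. rewrite sym_map_orb. do 2 f_equal.
  destruct x. reflexivity.
Qed.

Lemma sym_map_comp sw b1 b2 sw' b1' b2' :
  compO (sym_map sw b1 b2) (sym_map sw' b1' b2') =
  sym_map (xorb sw sw') (xorb b1 (if sw then b2' else b1'))
          (xorb b2 (if sw then b1' else b2')).
Proof.
  apply Orb_funext_iota. intro x. unfold compO. rewrite !sym_map_orb, square_sym_comp.
  reflexivity.
Qed.

Lemma Aff_sym_map F : Aff M F -> exists sw b1 b2, F = sym_map sw b1 b2.
Proof.
  intros (phi & HA & HF). destruct (NA_square_sym phi HA) as (sw & b1 & b2 & h & Hh & E).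
  exists sw, b1, b2. apply Orb_funext_iota. intro x.
  rewrite HF, sym_map_orb, E. apply orb_iota_pmm, Hh.
Qed.

Lemma orb_square_point_inj sw b1 b2 sw' b1' b2' :
  orb M (iota (square_sym s sw b1 b2 (square_point s))) =
  orb M (iota (square_sym s sw' b1' b2' (square_point s))) ->
  sw = sw' /\ b1 = b1' /\ b2 = b2'.
Proof.
  intro E. destruct (orb_eq_orbit M M_idm _ _ E) as (g & Hg & Eg).
  apply (square_sym_point_inj s s_pos).
  apply (pmm_open_square s (pull g)); try apply (square_sym_point_open s s_pos).
  - apply mem_pull, Hg.
  - unfold pull. rewrite <- Eg, iota_left. reflexivity.
Qed.

Lemma sym_map_inj sw b1 b2 sw' b1' b2' : sym_map sw b1 b2 = sym_map sw' b1' b2' ->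
  sw = sw' /\ b1 = b1' /\ b2 = b2'.
Proof.
  intro E. apply orb_square_point_inj. rewrite <- !sym_map_orb, E. reflexivity.
Qed.

Lemma NA_same_induced phi psi F : in_NA M phi -> in_NA M psi ->
  induces M phi F -> induces M psi F -> exists k, M k /\ forall y, phi y = k (psi y).
Proof.
  intros Hphi Hpsi Iphi Ipsi.
  destruct (NA_square_sym phi Hphi) as (sw & b1 & b2 & h1 & Hh1 & E1).
  destruct (NA_square_sym psi Hpsi) as (sw' & b1' & b2' & h2 & Hh2 & E2).
  assert (B : sw = sw' /\ b1 = b1' /\ b2 = b2').
  { apply orb_square_point_inj.
    rewrite <- (orb_iota_pmm h1 _ Hh1), <- (orb_iota_pmm h2 (square_sym s sw' b1' b2' _) Hh2).
    rewrite <- E1, <- E2, <- Iphi, <- Ipsi. reflexivity. }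
  destruct B as (<- & <- & <-).
  destruct (pmm_inv s h2 Hh2) as (h2inv & Hh2inv & L2 & _).
  exists (push (compm h1 h2inv)). split; [apply mem_push, pmm_comp; assumption |].
  intro y. rewrite <- (iota_right y). unfold push, compm.
  rewrite E1, E2, iota_left, L2. reflexivity.
Qed.

Lemma M_affine_centralizer c : is_affine c ->
  (forall g, M g -> forall x, c (g x) = g (c x)) -> forall x, c x = x.
Proof.
  intros HA Hc y.
  assert (Hpull : forall x, pull c x = x).
  { apply (pmm_affine_centralizer s s_pos); [apply pull_affine, HA |].
    intros h Hh x. unfold pull.
    rewrite <- (push_iota h x), Hc by (apply mem_push, Hh).
    unfold push. rewrite iota_left. reflexivity. }
  specialize (Hpull (iotainv y)). unfold pull in Hpull. rewrite iota_right in Hpull.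
  rewrite <- (iota_right (c y)), Hpull. apply iota_right.
Qed.

Lemma aut_M_inner alpha : is_aut M alpha ->
  exists phi, in_NA M phi /\ forall g, M g -> compm (alpha g) phi = compm phi g.
Proof.
  intros (Ain & Ainj & Asur & Ahom).
  set (beta := fun h => pull (alpha (push h))).
  assert (Baut : is_aut P beta).
  { split; [| split; [| split]].
    - intros h Hh. apply mem_pull, Ain, mem_push, Hh.
    - intros g h Hg Hh E. unfold beta in E. apply (f_equal push) in E.
      rewrite !push_pull in E. apply Ainj in E; try (apply mem_push; assumption).
      apply (f_equal pull) in E. rewrite !pull_push in E. exact E.
    - intros h Hh. destruct (Asur (push h)) as (g & Hg & E); [apply mem_push, Hh |].
      exists (pull g). split; [apply mem_pull, Hg |].
      unfold beta. rewrite push_pull, E, pull_push. reflexivity.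
    - intros g h Hg Hh. unfold beta.
      rewrite push_comp, Ahom, pull_comp by (apply mem_push; assumption). reflexivity. }
  destruct (aut_pmm_inner s s_pos beta Baut) as (sw & e1 & e2 & j1 & j2 & S1 & S2 & Q).
  exists (push (norm_map s sw e1 e2 j1 j2)). split.
  - split; [apply push_affine | apply normalizes_push];
      [apply norm_map_affine | apply norm_map_normalizes]; assumption.
  - intros g Hg. apply functional_extensionality. intro y. unfold compm.
    replace (alpha g) with (push (beta (pull g))) by (unfold beta; rewrite !push_pull; reflexivity).
    unfold push. rewrite iota_left, Q by (apply mem_pull, Hg).
    unfold pull. rewrite iota_right. reflexivity.
Qed.

Lemma Sym_iff_sym_map F : Sym M F <-> exists sw b1 b2, F = sym_map sw b1 b2.
Proof.
  split.
  - intros [HA _]. apply Aff_sym_map, HA.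
  - intros (sw & b1 & b2 & ->). apply Sym_sym_map.
Qed.

Lemma Sym_iff_Aff F : Sym M F <-> Aff M F.
Proof.
  split; [intros [HA _]; exact HA |].
  intro HA. apply Sym_iff_sym_map, Aff_sym_map, HA.
Qed.

Definition sym_map3 (t : bool * bool * bool) : Orb M -> Orb M :=
  sym_map (fst (fst t)) (snd (fst t)) (snd t).

Lemma sym_map3_enum (ts : list (bool * bool * bool)) :
  NoDup ts -> (forall t, In t ts) ->
  NoDup (map sym_map3 ts) /\ forall F, Sym M F <-> In F (map sym_map3 ts).
Proof.
  intros Hnd Hall. split.
  - apply NoDup_map_NoDup_ForallPairs; [| exact Hnd].
    intros [[a b] c] [[a' b'] c'] _ _ E. unfold sym_map3 in E; cbn [fst snd] in E.
    destruct (sym_map_inj _ _ _ _ _ _ E) as (-> & -> & ->). reflexivity.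
  - intro F. rewrite Sym_iff_sym_map, in_map_iff. split.
    + intros (sw & b1 & b2 & ->). exists (sw, b1, b2). split; [reflexivity | apply Hall].
    + intros ([[sw b1] b2] & <- & _). exists sw, b1, b2. reflexivity.
Qed.

Let mref := sym_map false true false.
Let dref := sym_map true false false.

Lemma sym_map_dihedral :
  compO mref mref = (fun O => O) /\ compO dref dref = (fun O => O) /\
  compO mref (compO dref (compO mref dref)) = compO dref (compO mref (compO dref mref)).
Proof.
  unfold mref, dref. rewrite !sym_map_comp. cbn [xorb].
  rewrite <- sym_map_idm. auto.
Qed.

Lemma Sym_dihedral :
  let L := ((fun O => O) :: mref :: dref :: compO mref dref :: compO dref mref
             :: compO mref (compO dref mref) :: compO dref (compO mref dref)
             :: compO mref (compO dref (compO mref dref)) :: nil)%list in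
  NoDup L /\ (forall F, Sym M F <-> In F L).
Proof.
  cbv zeta. unfold mref, dref. rewrite !sym_map_comp, sym_map_idm. cbn [xorb].
  apply (sym_map3_enum ((false, false, false) :: (false, true, false) :: (true, false, false)
                        :: (true, true, false) :: (true, false, true) :: (true, true, true)
                        :: (false, false, true) :: (false, true, true) :: nil)%list).
  - repeat constructor; simpl; intuition discriminate.
  - intros [[[|] [|]] [|]]; simpl; tauto.
Qed.

Lemma Omega_rel_unique F alpha beta :
  Omega_rel M F alpha -> Omega_rel M F beta -> out_eq M alpha beta.
Proof.
  intros (phi & Hphi & Iphi & Ralpha) (psi & Hpsi & Ipsi & Rbeta).
  destruct (NA_same_induced phi psi F Hphi Hpsi Iphi Ipsi) as (k & Hk & Ek).
  exact (out_eq_of_factor M phi psi k alpha beta (proj1 Hpsi) Hk Ek Ralpha Rbeta).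
Qed.

Lemma Omega_rel_injective F1 F2 alpha1 alpha2 :
  Omega_rel M F1 alpha1 -> Omega_rel M F2 alpha2 -> out_eq M alpha1 alpha2 -> F1 = F2.
Proof. apply (Omega_rel_inj M M_comp M_inv M_affine), M_affine_centralizer. Qed.

Lemma Omega_rel_surjective alpha : is_aut M alpha ->
  exists F beta, Aff M F /\ Omega_rel M F beta /\ out_eq M alpha beta.
Proof.
  intro Haut. destruct (aut_M_inner alpha Haut) as (phi & Hphi & Ralpha).
  assert (Iphi : induces M phi (induced M phi))
    by (apply (induces_induced M M_idm M_comp M_inv), Hphi).
  exists (induced M phi), alpha. split; [exists phi; auto | split].
  - exists phi. auto.
  - exists idm. split; [exact M_idm | reflexivity].
Qed.
End Conjugate.

Theorem lemma12 (s : R) (iota : map2) (M : group2) :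
  0 < s -> is_isometry iota -> conj_group iota (pmm_square s) M ->
  (* m-ref.: reflection of the square iota([0,s]^2) in the line iota(x1 = s/2);
     d-ref.: reflection in the diagonal iota(x1 = x2) *)
  exists mref dref : Orb M -> Orb M,
    (forall x, mref (orb M (iota x)) = orb M (iota (s - fst x, snd x))) /\
    (forall x, dref (orb M (iota x)) = orb M (iota (snd x, fst x))) /\
    (* Sym(M) = <m-ref., d-ref.> is dihedral of order 8 *)
    compO mref mref = (fun O => O) /\
    compO dref dref = (fun O => O) /\
    compO mref (compO dref (compO mref dref))
      = compO dref (compO mref (compO dref mref)) /\
    (let L := ((fun O => O) :: mref :: dref :: compO mref dref :: compO dref mref
               :: compO mref (compO dref mref) :: compO dref (compO mref dref)
               :: compO mref (compO dref (compO mref dref)) :: nil)%list in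
     List.NoDup L /\ (forall F, Sym M F <-> List.In F L)) /\
    (* Sym(M) = Aff(M) *)
    (forall F, Sym M F <-> Aff M F) /\
    (* Omega : Aff(M) -> Out(M) is a well-defined isomorphism *)
    (forall F, Aff M F -> exists alpha, is_aut M alpha /\ Omega_rel M F alpha) /\
    (forall F alpha beta, Omega_rel M F alpha -> Omega_rel M F beta ->
       out_eq M alpha beta) /\
    (forall F1 F2 alpha1 alpha2, Omega_rel M F1 alpha1 -> Omega_rel M F2 alpha2 ->
       Omega_rel M (compO F1 F2) (fun g => alpha1 (alpha2 g))) /\
    (forall F1 F2 alpha1 alpha2, Aff M F1 -> Aff M F2 ->
       Omega_rel M F1 alpha1 -> Omega_rel M F2 alpha2 ->
       out_eq M alpha1 alpha2 -> F1 = F2) /\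
    (forall alpha, is_aut M alpha ->
       exists F beta, Aff M F /\ Omega_rel M F beta /\ out_eq M alpha beta).
Proof.
  intros s_pos Hiso HM.
  destruct (affine_inv iota (isometry_affine iota Hiso)) as (iotainv & Hinv & Hl & Hr).
  exists (sym_map s iota iotainv M false true false), (sym_map s iota iotainv M true false false).
  destruct (sym_map_dihedral s iota iotainv M) as (Hm & Hd & Hmd); try assumption.
  split; [intro x; apply sym_map_orb; assumption |].
  split; [intro x; apply sym_map_orb; assumption |].
  do 3 (split; [assumption |]).
  split; [apply (Sym_dihedral s iota iotainv); assumption |].
  split; [intro F; apply (Sym_iff_Aff s iota iotainv); assumption |].
  split; [apply Omega_rel_exists |].
  split; [intros F alpha beta; apply (Omega_rel_unique s iota iotainv); assumption |].
  split; [apply Omega_rel_comp |].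
  split; [intros F1 F2 alpha1 alpha2 _ _;
          apply (Omega_rel_injective s iota iotainv); assumption |].
  intro alpha. apply (Omega_rel_surjective s iota iotainv); assumption.
Qed.
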